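(* Consider a particular run of Algorithm 1 (parameter $\alpha \in (0,1/2)$). Let $\zeta$ be a constant such that $-\frac{\zeta}{w_i^t} \le \partial_i L^t(\mathbf{w}^t) \le \zeta$ for all $i \in [m]$, $t \in [T]$. Then for every $i, t$, \[(w_i^t)^{\alpha - 1} - \left(\frac{1}{w_i^t} + 1\right)\eta_t \zeta \le (w_i^{t+1})^{\alpha-1} \le (w_i^t)^{\alpha-1} + \left(\frac{1}{\min_k w_k^t} + 1\right)\eta_t \zeta.\] Furthermore, if $\eta_t \zeta \le (1-\alpha)^2 (w_i^t)^\alpha$ for all $i$, then for every $i$, \[(w_i^{t+1})^{\alpha-1} \le (w_i^t)^{\alpha-1} + (m+1)\eta_t \zeta.\]
   Context: Setting. There are $m$ experts and $n$ outcomes; $\Delta^k$ denotes the probability simplex in $\mathbb{R}^k$. For reports $\mathbf{p}^1, \dots, \mathbf{p}^m \in \Delta^n$ and $\mathbf{w} \in \Delta^m$, the logarithmic pool is $p^*_j(\mathbf{w}) = \frac{\prod_{k} (p^k_j)^{w_k}}{\sum_{\ell=1}^n \prod_{k} (p^k_\ell)^{w_k}}$. At each time $t\in[T]$, reports $\mathbf{p}^{t,1},\dots,\mathbf{p}^{t,m}$ and an outcome $j_t$ are revealed, with loss $L^t(\mathbf{w}) := -\ln p^*_{j_t}(\mathbf{w})$ and, by convention, $\partial_i L^t(\mathbf{w}) := \sum_{\ell=1}^n p^*_\ell(\mathbf{w}) \ln p^{t,i}_\ell - \ln p^{t,i}_{j_t}$. Algorithm 1 (parameter $\alpha \in (0,1/2)$):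 $R(\mathbf{w}) = -\frac{1}{\alpha}\sum_i w_i^\alpha$, $\eta = \frac{1}{\sqrt{T}\ln T}\cdot\frac{1}{12 m^{(1+\alpha)/2} n}$, $\mathbf{w}^1 = (1/m,\dots,1/m)$, $\eta_0 = +\infty$. For $t = 1,\dots,T$: if $\eta \le \min_i (w_i^t)^\alpha$ set $\eta_t = \min(\eta_{t-1}, \eta)$, else $\eta_t = \min(\eta_{t-1}, \min_i w_i^t)$; then $\mathbf{w}^{t+1} \in \Delta^m$ is defined by $-(w_i^{t+1})^{\alpha-1} = -(w_i^t)^{\alpha-1} - \eta_t \partial_i L^t(\mathbf{w}^t) + c$ for all $i$, with $c \in \mathbb{R}$ the unique constant making $\sum_i w_i^{t+1} = 1$. *)

From mathcomp Require Import all_boot all_order all_algebra.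
From mathcomp Require Import all_classical all_reals all_analysis.
Set Implicit Arguments. Unset Strict Implicit. Unset Printing Implicit Defensive.
Import Order.TTheory GRing.Theory Num.Theory.
Local Open Scope ring_scope.

Section Defs.
Variable R : realType.

(* minimum of a family over 'I_m, initialised with 1; used only for
   families of values in (0,1] (weights in the simplex and their
   alpha-powers), for which it is the true minimum. *)
Definition minw (m : nat) (f : 'I_m -> R) : R := \big[Num.min/1]_(i < m) f i.

(* logarithmic pool p*_l(w) of reports P k l (expert k, outcome l) *)
Definition logpool (m n : nat) (P : 'I_m -> 'I_n -> R) (w : 'I_m -> R)
  (l : 'I_n) : R :=
  (\prod_(k < m) powR (P k l) (w k)) /
  (\sum_(l' < n) \prod_(k < m) powR (P k l') (w k)).

Definition gradL (m n : nat) (P : 'I_m -> 'I_n -> R) (j : 'I_n)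
  (w : 'I_m -> R) (i : 'I_m) : R :=
  \sum_(l < n) logpool P w l * ln (P i l) - ln (P i j).

Definition eta_param (m n T : nat) (alpha : R) : R :=
  (Num.sqrt (T%:R) * ln (T%:R))^-1 *
  (12 * powR (m%:R) ((1 + alpha) / 2) * n%:R)^-1.

Definition eta_cand (m : nat) (alpha eta : R) (wt : 'I_m -> R) : R :=
  if eta <= minw (fun i => powR (wt i) alpha) then eta else minw wt.

(* eta_t for t >= 1, with eta_0 = +oo, i.e. eta_1 = eta_cand at time 1 and
   eta_{t+1} = min(eta_t, eta_cand at time t+1).  (Value at t = 0 unused.) *)
Fixpoint eta_seq (m : nat) (alpha eta : R) (w : nat -> 'I_m -> R) (t : nat)
  : R :=
  match t with
  | 0 => 0
  | 1 => eta_cand alpha eta (w 1%N)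
  | t'.+1 => Num.min (eta_seq alpha eta w t') (eta_cand alpha eta (w t))
  end.

Definition pos_simplex (k : nat) (x : 'I_k -> R) : Prop :=
  (forall i, 0 < x i) /\ \sum_(i < k) x i = 1.

(* (w, eta) is a run of Algorithm 1 with parameter alpha on reports
   P t k l (time t, expert k, outcome l) and outcomes J t, for t = 1..T *)
Definition alg1_run (m n T : nat) (alpha : R)
  (P : nat -> 'I_m -> 'I_n -> R) (J : nat -> 'I_n)
  (w : nat -> 'I_m -> R) : Prop :=
  (forall i, w 1%N i = m%:R^-1) /\
  (forall t, (1 <= t <= T.+1)%N -> pos_simplex (w t)) /\
  (forall t, (1 <= t <= T)%N ->
     exists c : R, forall i,
       - powR (w t.+1 i) (alpha - 1) =
       - powR (w t i) (alpha - 1)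
       - eta_seq alpha (eta_param m n T alpha) w t * gradL (P t) (J t) (w t) i
       + c).
End Defs.

From mathcomp Require Import all_boot all_order all_algebra.
From mathcomp Require Import all_classical all_reals all_analysis.
From mathcomp Require Import ring lra.
Import Order.TTheory GRing.Theory Num.Theory.

Set Implicit Arguments.
Unset Strict Implicit.
Unset Printing Implicit Defensive.
Local Open Scope ring_scope.

(* Write y_i = (w_i)^(alpha-1), a strictly decreasing function of w_i.  One
   step of Algorithm 1 adds eta_t g_i - c to every y_i.  As w^t and w^(t+1)
   both lie in the simplex, some coordinate of w does not increase and some
   does not decrease, so c lies between min_k eta_t g_k and max_k eta_t g_k;
   the bounds on g then give the first claim.  For the second, the point
   u = (1 - A) w^t + A/m of the simplex, with A = eta_t zeta m^alpha/(1-alpha),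
   satisfies u_i^(alpha-1) <= y_i - eta_t zeta/w_i + m eta_t zeta by the
   Bernoulli inequality for x^(1-alpha) and x^alpha; comparing w^(t+1) with u
   coordinatewise gives c >= -m eta_t zeta. *)

Section RealField.
Variable R : realFieldType.
Implicit Types (A x y z : R).

Lemma mix_gt0 A x y : 0 <= A < 1 -> 0 < x -> 0 <= y ->
  0 < (1 - A) * x + A * y.
Proof.
move=> /andP[A0 A1] x0 y0; apply: ltr_pwDl; last exact: mulr_ge0.
by rewrite mulr_gt0 // subr_gt0.
Qed.

Lemma ge0_of_Ndiv_le z x : 0 < x -> - (z / x) <= z -> 0 <= z.
Proof.
move=> x0 zx; have x'0 : 0 < x^-1 by rewrite invr_gt0.
rewrite leNgt; apply/negP => z0; nra.
Qed.

Lemma exists_le_of_sum_eq1 (I : finType) (p q : I -> R) :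
  \sum_i p i = 1 -> \sum_i q i = 1 -> exists i, p i <= q i.
Proof.
move=> p1 q1; case: (pickP (@predT I)) => [i0 _ | I0]; last first.
  by move: p1; rewrite big_pred0 // => /eqP; rewrite eq_sym oner_eq0.
have [//|nle] := pselect (exists i, p i <= q i).
have lt_qp i : q i < p i.
  by rewrite ltNge; apply/negP => le_pq; apply: nle; exists i.
have : \sum_i q i < \sum_i p i.
  apply: ltr_sum => [|i _]; last exact: lt_qp.
  by apply/hasP; exists i0; rewrite ?mem_index_enum.
by rewrite p1 q1 ltxx.
Qed.

Lemma sum_mix_uniform m A (w : 'I_m -> R) : (0 < m)%N -> \sum_i w i = 1 ->
  \sum_i ((1 - A) * w i + A / m%:R) = 1.
Proof.
move=> m_gt0 w1; rewrite big_split /= -mulr_sumr w1 sumr_const card_ord.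
by rewrite mulr1 -[A / _ *+ m]mulr_natr divfK ?subrK // pnatr_eq0 -lt0n.
Qed.

End RealField.

Section PowR.
Variable R : realType.
Implicit Types (a al c e p q t w x y A M : R).

Lemma lt0_ler_powR e x y : e < 0 -> 0 < x -> 0 < y ->
  (x `^ e <= y `^ e) = (y <= x).
Proof.
by move=> e0 x0 y0; rewrite /powR !gt_eqF // ler_expR ler_nM2l // ler_ln.
Qed.

(* Young's inequality with exponents 1/p and 1/(1-p), applied to q^p and 1. *)
Lemma bernoulli_powR p q : 0 < p < 1 -> 0 <= q -> q `^ p <= 1 + p * (q - 1).
Proof.
move=> /andP[p0 p1] q0.
have := @conjugate_powR R (q `^ p) 1 p^-1 (1 - p)^-1 (powR_ge0 _ _) ler01.
rewrite !invr_gt0 p0 subr_gt0 p1 !invrK addrC subrK => /(_ isT isT erefl).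
rewrite -powRrM mulfV ?gt_eqF // powRr1 // powR1 !mulr1; lra.
Qed.

Lemma powR_sub_line_sign al A t : 0 < al < 1 -> 0 <= A <= 1 - al ->
  A <= (1 - al) * t `^ al -> 0 < t ->
  (t - 1) * (t `^ al - ((1 - A) * t + A)) <= 0.
Proof.
move=> al01 /andP[A0 Ab] At t0; have /andP[al0 al1] := al01.
have [t_ge1|t_lt1] := lerP 1 t.
  apply: mulr_ge0_le0; first by rewrite subr_ge0.
  rewrite subr_le0; apply: le_trans (bernoulli_powR al01 (ltW t0)) _; nra.
have b01 : 0 < 1 - al < 1 by apply/andP; split; lra.
have tb := bernoulli_powR b01 (ltW t0).
have t_split : t `^ al * t `^ (1 - al) = t.
  rewrite -powRD; last by apply/implyP => _; rewrite gt_eqF.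
  by rewrite addrC subrK powRr1 // ltW.
have ta0 := powR_ge0 t al.
have P1 : 0 <= ((1 - al) * t `^ al - A) * (1 - t).
  by apply: mulr_ge0; rewrite subr_ge0 // ltW.
have P2 : 0 <= t `^ al * (1 + (1 - al) * (t - 1) - t `^ (1 - al)).
  by apply: mulr_ge0; rewrite // subr_ge0.
apply: mulr_le0_ge0; first by rewrite subr_le0 ltW.
rewrite subr_ge0; nra.
Qed.

Lemma powR_mix_uniform_le al M w a A : 0 < al < 1 -> 0 < M -> 0 < w ->
  0 <= A <= 1 - al -> A * (1 - al) = a * M `^ al ->
  a <= (1 - al) ^+ 2 * w `^ al ->
  ((1 - A) * w + A / M) `^ (al - 1) <= w `^ (al - 1) - a / w + a * M.
Proof.
move=> al01 M0 w0 A0b AbE aw; have /andP[al0 al1] := al01.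
have /andP[A0 Ab] := A0b; set b := 1 - al in Ab AbE aw *.
have b01 : 0 < b < 1 by rewrite subr_gt0 al1 ltrBlDr ltrDl.
have A1 : A < 1 by rewrite (le_lt_trans Ab) //; case/andP: b01.
set u := (1 - A) * w + A / M; set X := w `^ (al - 1); set t := M * w.
have u0 : 0 < u by rewrite mix_gt0 ?A0 ?A1 // invr_ge0 ltW.
have Ma0 : 0 < M `^ al by rewrite powR_gt0.
have aE : a = A * b / M `^ al by rewrite AbE mulfK // gt_eqF.
have taE : t `^ al = M `^ al * (w * X).
  by rewrite /X (mulr_powRB1 (ltW w0) al0) powRM // ltW.
have At : A <= b * t `^ al.
  suff : A * b <= b * t `^ al * b by rewrite ler_pM2r //; case/andP: b01.
  rewrite AbE taE /X (mulr_powRB1 (ltW w0) al0).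
  rewrite (_ : _ * b = b ^+ 2 * w `^ al * M `^ al); last by ring.
  by apply: ler_wpM2r => //; apply: ltW.
have sign := powR_sub_line_sign al01 A0b At (mulr_gt0 M0 w0).
(* [u^(al-1) = w^(al-1) (w/u)^(1-al)], and Bernoulli bounds the last factor. *)
have uE : u `^ (al - 1) = X * (w / u) `^ b.
  rewrite /X /powR !gt_eqF ?divr_gt0 // -expRD ln_div ?posrE //.
  by congr expR; rewrite /b; ring.
have diffE : X * (1 + b * (w / u - 1)) - (X - a / w + a * M)
    = a / (M * w * u) * ((t - 1) * (t `^ al - ((1 - A) * t + A))).
  rewrite taE aE /u /t; field.
  rewrite !gt_eqF ?powR_gt0 //; apply: ltr_pwDl A0.
  by rewrite !mulr_gt0 // subr_gt0.
have wu_ge0 : 0 <= w / u by rewrite ltW // divr_gt0.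
rewrite uE; apply: le_trans (ler_wpM2l (ltW (powR_gt0 _ w0)) _) _.
  exact: bernoulli_powR b01 wu_ge0.
rewrite -subr_le0 diffE; apply: mulr_ge0_le0 sign.
rewrite divr_ge0 ?(ltW (mulr_gt0 (mulr_gt0 M0 w0) u0)) //.
by rewrite aE divr_ge0 ?mulr_ge0 ?(ltW Ma0) ?(ltW (andP b01).1).
Qed.

Lemma mulr_powR_le al c a x M : 0 < al -> 0 < x -> 0 < M -> 0 <= c ->
  x <= M^-1 -> a <= c * x `^ al -> a * M `^ al <= c.
Proof.
move=> al0 x0 M0 c0 xM ax.
apply: le_trans (ler_wpM2r (powR_ge0 _ _) ax) _.
rewrite -mulrA -powRM ?(ltW x0) ?(ltW M0) //; apply: ler_piMr => //.
have := @ge0_ler_powR R al (ltW al0) (x * M) 1.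
rewrite powR1; apply; rewrite ?nnegrE ?mulr_ge0 ?(ltW x0) ?(ltW M0) //.
by rewrite -ler_pdivlMr // div1r.
Qed.

End PowR.

Lemma minw_gt0 (R : realType) m (f : 'I_m -> R) :
  (forall i, 0 < f i) -> 0 < minw f.
Proof.
move=> f_gt0; rewrite /minw; elim/big_ind: _ => [||i _]; rewrite ?ltr01 //.
by move=> x y x0 y0; rewrite lt_min x0 y0.
Qed.

Lemma minw_le (R : realType) m (f : 'I_m -> R) i : minw f <= f i.
Proof. by rewrite /minw (bigD1 i) //= ge_min lexx. Qed.

Lemma pos_simplex_dim_gt0 (R : realType) k (x : 'I_k -> R) :
  pos_simplex x -> (0 < k)%N.
Proof.
by case: k x => // x [_]; rewrite big_ord0 => /eqP; rewrite eq_sym oner_eq0.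
Qed.

Section UpdateStep.
Variables (R : realType) (m : nat) (alpha e c zeta : R).
Variables (w w' g : 'I_m -> R).
Hypotheses (alpha_lt1 : alpha < 1) (w_simplex : pos_simplex w)
  (w'_simplex : pos_simplex w').
Hypothesis update :
  forall i, w' i `^ (alpha - 1) = w i `^ (alpha - 1) + e * g i - c.

Let w_gt0 := w_simplex.1.
Let w'_gt0 := w'_simplex.1.

Lemma update_shift_le : exists k, c <= e * g k.
Proof.
have [k le_w'w] := exists_le_of_sum_eq1 w'_simplex.2 w_simplex.2.
exists k; rewrite -subr_ge0 -(lerD2l (w k `^ (alpha - 1))) addr0 addrA -update.
by rewrite lt0_ler_powR ?subr_lt0.
Qed.

Lemma update_shift_ge : exists k, e * g k <= c.
Proof.
have [k le_ww'] := exists_le_of_sum_eq1 w_simplex.2 w'_simplex.2.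
exists k; rewrite -subr_le0 -(lerD2l (w k `^ (alpha - 1))) addr0 addrA -update.
by rewrite lt0_ler_powR ?subr_lt0.
Qed.

Hypotheses (e_ge0 : 0 <= e)
  (g_bound : forall i, - (zeta / w i) <= g i <= zeta).

Let zeta_ge0 (k : 'I_m) : 0 <= zeta.
Proof.
have /andP[g_ge g_le] := g_bound k.
exact: ge0_of_Ndiv_le (w_gt0 k) (le_trans g_ge g_le).
Qed.

Lemma update_shift_bounds : - (e * (zeta / minw w)) <= c <= e * zeta.
Proof.
have [k c_le] := update_shift_le; have [l c_ge] := update_shift_ge.
have /andP[g_ge g_le] := g_bound k; have /andP[gl_ge gl_le] := g_bound l.
have zeta0 := zeta_ge0 l.
rewrite (le_trans c_le (ler_wpM2l e_ge0 g_le)) andbT.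
apply: le_trans c_ge; rewrite -mulrN; apply: ler_wpM2l => //.
apply: le_trans gl_ge; rewrite lerN2 ler_wpM2l // lef_pV2 ?posrE ?minw_gt0 //.
exact: minw_le.
Qed.

Lemma update_bounds i :
  w i `^ (alpha - 1) - ((w i)^-1 + 1) * e * zeta <= w' i `^ (alpha - 1) /\
  w' i `^ (alpha - 1) <= w i `^ (alpha - 1) + ((minw w)^-1 + 1) * e * zeta.
Proof.
have /andP[c_ge c_le] := update_shift_bounds.
have /andP[g_ge g_le] := g_bound i.
have eg_ge : e * - (zeta / w i) <= e * g i by exact: ler_wpM2l.
have eg_le : e * g i <= e * zeta by exact: ler_wpM2l.
rewrite update; split; lra.
Qed.

Hypotheses (alpha_gt0 : 0 < alpha)
  (small_step : forall i, e * zeta <= (1 - alpha) ^+ 2 * w i `^ alpha).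

Lemma update_shift_ge_dim : - (m%:R * (e * zeta)) <= c.
Proof.
have [w1 w'1] := (w_simplex.2, w'_simplex.2).
set a := e * zeta; set M := m%:R; set b := 1 - alpha.
have small i : a <= b ^+ 2 * w i `^ alpha := small_step i.
have M0 : 0 < M by rewrite ltr0n (pos_simplex_dim_gt0 w_simplex).
have b0 : 0 < b by rewrite subr_gt0.
have b1 : b < 1 by rewrite ltrBlDr ltrDl.
have unif1 : \sum_(i < m) M^-1 = 1.
  by rewrite sumr_const card_ord -mulr_natr mulVf ?gt_eqF.
have [k wk] := exists_le_of_sum_eq1 w1 unif1.
have a0 : 0 <= a by rewrite mulr_ge0 ?(zeta_ge0 k).
have aM := mulr_powR_le alpha_gt0 (w_gt0 k) M0 (sqr_ge0 b) wk (small k).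
set A := a * M `^ alpha / b.
have AbE : A * b = a * M `^ alpha by rewrite mulfVK // gt_eqF.
have A0 : 0 <= A.
  by apply: divr_ge0; [exact: mulr_ge0 a0 (powR_ge0 _ _) | exact: ltW].
have Ab : A <= b.
  suff : A * b <= b * b by rewrite ler_pM2r.
  by rewrite AbE -expr2.
pose u j := (1 - A) * w j + A / M.
have u1 : \sum_j u j = 1.
  exact: sum_mix_uniform (pos_simplex_dim_gt0 w_simplex) w1.
have [j le_uw'] := exists_le_of_sum_eq1 u1 w'1.
have u0 : 0 < u j.
  by rewrite mix_gt0 ?A0 ?(le_lt_trans Ab b1) ?invr_ge0 ?(ltW M0) ?(w_gt0 j).
have alpha01 : 0 < alpha < 1 by rewrite alpha_gt0 alpha_lt1.
have A0b : 0 <= A <= b by rewrite A0 Ab.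
have := powR_mix_uniform_le alpha01 M0 (w_gt0 j) A0b AbE (small j).
have ea_lt0 : alpha - 1 < 0 by rewrite subr_lt0.
rewrite -(lt0_ler_powR ea_lt0 (w'_gt0 j) u0) in le_uw'.
move=> /(le_trans le_uw'); rewrite update.
have /andP[g_ge _] := g_bound j.
have eg_ge : e * - (zeta / w j) <= e * g j by exact: ler_wpM2l.
rewrite /a -mulrA; lra.
Qed.

Lemma update_le_dim i :
  w' i `^ (alpha - 1) <= w i `^ (alpha - 1) + (m%:R + 1) * e * zeta.
Proof.
have c_ge := update_shift_ge_dim.
have /andP[_ g_le] := g_bound i.
have eg_le : e * g i <= e * zeta by exact: ler_wpM2l.
rewrite update; lra.
Qed.

End UpdateStep.

Lemma eta_cand_ge0 (R : realType) m (al eta : R) (x : 'I_m -> R) :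
  0 <= eta -> (forall i, 0 < x i) -> 0 <= eta_cand al eta x.
Proof.
by move=> eta0 x_gt0; rewrite /eta_cand; case: ifP => // _; apply/ltW/minw_gt0.
Qed.

Lemma eta_seq_ge0 (R : realType) m (al eta : R) (w : nat -> 'I_m -> R) N :
  0 <= eta -> (forall s, (1 <= s <= N)%N -> forall i, 0 < w s i) ->
  forall s, (s <= N)%N -> 0 <= eta_seq al eta w s.
Proof.
move=> eta0 w_gt0; elim=> [|[|s] IH] sN //.
  by apply: eta_cand_ge0 => //; apply: w_gt0.
rewrite [eta_seq _ _ _ _]/= le_min IH ?(ltnW sN) //.
by apply: eta_cand_ge0 => //; apply: w_gt0.
Qed.

Lemma eta_param_ge0 (R : realType) m n T (al : R) :
  (1 <= T)%N -> 0 <= eta_param m n T al.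
Proof.
move=> T1; rewrite /eta_param; apply: mulr_ge0; rewrite invr_ge0.
  by apply: mulr_ge0; [exact: sqrtr_ge0 | rewrite ln_ge0 // ler1n].
by rewrite !mulr_ge0 ?powR_ge0.
Qed.

Theorem lemma2 (R : realType) (m n T : nat) (alpha zeta : R)
  (P : nat -> 'I_m -> 'I_n -> R) (J : nat -> 'I_n) (w : nat -> 'I_m -> R) :
  0 < alpha < 2^-1 ->
  (forall t k, (1 <= t <= T)%N -> pos_simplex (P t k)) ->
  @alg1_run R m n T alpha P J w ->
  (forall t i, (1 <= t <= T)%N ->
     - (zeta / w t i) <= gradL (P t) (J t) (w t) i <= zeta) ->
  forall t, (1 <= t <= T)%N ->
    let eta_t := eta_seq alpha (eta_param m n T alpha) w t in
    (forall i,
       powR (w t i) (alpha - 1) - ((w t i)^-1 + 1) * eta_t * zeta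
         <= powR (w t.+1 i) (alpha - 1)
       /\ powR (w t.+1 i) (alpha - 1)
         <= powR (w t i) (alpha - 1) + ((minw (w t))^-1 + 1) * eta_t * zeta)
    /\
    ((forall i, eta_t * zeta <= (1 - alpha)^+2 * powR (w t i) alpha) ->
     forall i, powR (w t.+1 i) (alpha - 1)
                 <= powR (w t i) (alpha - 1) + (m%:R + 1) * eta_t * zeta).
Proof.
move=> /andP[alpha_gt0 alpha_lt_half] _ [_ [run_simplex run_update]] grad_bound.
move=> t tT eta_t; have /andP[t_ge1 t_le] := tT.
have alpha_lt1 : alpha < 1.
  by rewrite (lt_trans alpha_lt_half) // invf_lt1 // ltr1n.
have w_simplex : pos_simplex (w t) by apply: run_simplex; rewrite t_ge1 leqW.
have w'_simplex : pos_simplex (w t.+1) by apply: run_simplex; rewrite ltnS.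
have eta_ge0 : 0 <= eta_t.
  apply: (eta_seq_ge0 _ (N := T.+1)); last exact: leqW.
    exact: eta_param_ge0 (leq_trans t_ge1 t_le).
  by move=> s /run_simplex [].
have [c update] := run_update t tT; rewrite -/eta_t in update.
have update' i : powR (w t.+1 i) (alpha - 1)
    = powR (w t i) (alpha - 1) + eta_t * gradL (P t) (J t) (w t) i - c.
  by apply: oppr_inj; rewrite update !opprB addrC opprD.
have g_bound := grad_bound t ^~ tT.
split => [|small_step].
  exact: update_bounds alpha_lt1 w_simplex w'_simplex update' eta_ge0 g_bound.
exact: update_le_dim alpha_lt1 w_simplex w'_simplex update' eta_ge0 g_bound
  alpha_gt0 small_step.
Qed.
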